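(* Let $A$ be a finite set and let $X \subset A^{\mathbb Z}$ be a strongly irreducible subshift. Then $X$ is surjunctive and its automorphism group $\mathrm{Aut}(X)$ is residually finite. Moreover, $X$ admits a shift-invariant Borel probability measure with full support.
   Context: $A^{\mathbb Z}$ carries the product topology of discrete topologies and the shift action $(gx)(h)=x(h-g)$. A subshift is a closed shift-invariant subset. $X$ is strongly irreducible if there is a finite $\Delta\subset\mathbb Z$ such that for all finite $\Omega_1,\Omega_2\subset\mathbb Z$ with $(\Omega_1-\Delta)\cap\Omega_2=\varnothing$ and all $x_1,x_2\in X$ there is $x\in X$ with $x|_{\Omega_1}=x_1|_{\Omega_1}$ and $x|_{\Omega_2}=x_2|_{\Omega_2}$. A cellular automaton on $X$ is a continuous shift-equivariant map $X\to X$; $X$ is surjunctive if every injective cellular automaton $X\to X$ is surjective; $\mathrm{Aut}(X)$ is the group of bijective cellular automata $X\to X$ under composition. A group is residually finite if the intersection of its finite-index subgroups is trivial. *)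

From HB Require Import structures.
From mathcomp Require Import all_boot all_order all_algebra.
From mathcomp Require Import all_classical all_reals all_analysis.
From mathcomp Require Import Rstruct Rstruct_topology.

Set Implicit Arguments.
Unset Strict Implicit.
Unset Printing Implicit Defensive.

Import Order.TTheory GRing.Theory Num.Theory.
Local Open Scope classical_set_scope.
Local Open Scope ring_scope.

Definition cfg (A : finType) : Type :=
  prod_topology (fun _ : int => discrete_topology A).

Definition shift (A : finType) (g : int) (x : cfg A) : cfg A :=
  fun h => x (h - g).

Definition shift_invariant (A : finType) (X : set (cfg A)) : Prop :=
  forall (g : int) (x : cfg A), X x -> X (shift g x).

Definition subshift (A : finType) (X : set (cfg A)) : Prop :=
  closed X /\ shift_invariant X.

Definition strongly_irreducible (A : finType) (X : set (cfg A)) : Prop :=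
  exists Delta : set int, finite_set Delta /\
    forall Omega1 Omega2 : set int, finite_set Omega1 -> finite_set Omega2 ->
      [set w - d | w in Omega1 & d in Delta] `&` Omega2 = set0 ->
      forall x1 x2 : cfg A, X x1 -> X x2 ->
        exists x : cfg A, X x /\
          (forall h, Omega1 h -> x h = x1 h) /\ (forall h, Omega2 h -> x h = x2 h).

Definition shiftX (A : finType) (X : set (cfg A)) (hX : shift_invariant X)
    (g : int) (x : set_type X) : set_type X :=
  exist _ (shift g (sval x)) (mem_set (hX g _ (set_mem (svalP x)))).

Definition cellular_automaton (A : finType) (X : set (cfg A))
    (hX : shift_invariant X) (tau : set_type X -> set_type X) : Prop :=
  continuous tau /\ forall (g : int) (x : set_type X),
    tau (shiftX hX g x) = shiftX hX g (tau x).

Definition surjunctive (A : finType) (X : set (cfg A)) (hX : shift_invariant X) : Prop :=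
  forall tau : set_type X -> set_type X,
    cellular_automaton hX tau -> injective tau -> forall y : set_type X, exists x, tau x = y.

Definition Aut (A : finType) (X : set (cfg A)) (hX : shift_invariant X)
    : set (set_type X -> set_type X) :=
  [set tau | cellular_automaton hX tau /\ bijective tau].

(* Group-theoretic notions for a group G, given as a subset of a type T with
   multiplication [mul] and identity [one]. *)
Definition is_subgroup (T : Type) (G : set T) (mul : T -> T -> T) (one : T)
    (H : set T) : Prop :=
  [/\ H `<=` G, H one,
      (forall a b, H a -> H b -> H (mul a b)) &
      (forall a, H a -> exists2 b, H b & mul b a = one)].

Definition finite_index (T : Type) (G : set T) (mul : T -> T -> T) (H : set T) : Prop :=
  exists L : set T, [/\ finite_set L, L `<=` G &
    forall a, G a -> exists2 l, L l & exists2 h, H h & a = mul l h].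

Definition residually_finite (T : Type) (G : set T) (mul : T -> T -> T) (one : T) : Prop :=
  forall a, G a ->
    (forall H, is_subgroup G mul one H -> finite_index G mul H -> H a) -> a = one.

(* The space X with its subspace topology, pointed at a given x0 in X
   (the pointing is a technical requirement of the measure-theory library). *)
Definition ptX (A : finType) (X : set (cfg A)) (x0 : cfg A) (hx0 : x0 \in X)
  : Type := set_type X.
Section PointedX.
Variables (A : finType) (X : set (cfg A)) (x0 : cfg A) (hx0 : x0 \in X).
HB.instance Definition _ := Topological.copy (ptX hx0) (set_type X).
HB.instance Definition _ := isPointed.Build (ptX hx0) (exist _ x0 hx0 : set_type X).
End PointedX.
Definition borelX (A : finType) (X : set (cfg A)) (x0 : cfg A) (hx0 : x0 \in X)
  : measurableType _ := g_sigma_algebraType (@open (ptX hx0)).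


Definition Rreal : realType := Rdefinitions.R.

(* Strong irreducibility lets any two legal words be joined by a filler word of a fixed
   length N. Given a legal word w, choose contexts u = s ++ w and v = w ++ t so that
   the (finite) set of fillers between u and v is as small as possible: it then cannot
   shrink when u and v are embedded in wider contexts, so a single filler a works
   between u and v whatever surrounds them, and the block u a v b (b a filler from v
   back to u) can be repeated forever. Thus every legal word occurs in a periodic
   point of X, and periodic points are dense.
   Cellular automata preserve the finite sets of k-periodic points. An injective one
   therefore permutes them, so its image is dense, and closed by compactness. The
   automorphisms fixing every k-periodic point form a subgroup of finite index, and by
   density these subgroups intersect trivially. Finally, a convergent weighted sum of
   the uniform measures on the sets of (n+1)k0-periodic points is a shift-invariant
   probability measure that charges every nonempty open set. *)

From Pilot Require Import Defs.
From HB Require Import structures.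
From mathcomp Require Import all_boot all_order all_algebra.
From mathcomp Require Import all_classical all_reals all_analysis.
From mathcomp Require Import Rstruct Rstruct_topology.
From mathcomp Require Import zify ring.

Set Implicit Arguments.
Unset Strict Implicit.
Unset Printing Implicit Defensive.

Import Order.TTheory GRing.Theory Num.Theory.
Local Open Scope classical_set_scope.
Local Open Scope ring_scope.

(* The analysis library also exports a [shift] on normed modules. *)
Local Notation shift := Defs.shift.

Section ProductTopology.
Variable A : finType.

Definition agree (n : nat) (x y : cfg A) := forall i : int, (`|i| <= n)%N -> x i = y i.

Lemma nbhs_coord (x : cfg A) (i : int) : nbhs x [set y : cfg A | y i = x i].
Proof.
apply: (@proj_continuous int (fun _ : int => discrete_topology A) i x [set x i]).
by rewrite /= nbhs_principalE; apply/principal_filterP.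
Qed.

Lemma nbhs_agree (x : cfg A) n : nbhs x [set y | agree n y x].
Proof.
elim: n => [|n IH].
  by apply: filterS (nbhs_coord x 0) => y /= hy i; rewrite leqn0 absz_eq0 => /eqP ->.
apply: filterS (filterI IH (filterI (nbhs_coord x n.+1%:Z) (nbhs_coord x (- n.+1%:Z)))).
move=> y [h1 [h2 h3]] i; rewrite leq_eqVlt ltnS => /orP[|]; last exact: h1.
by case: i => k /eqP; rewrite ?NegzE ?abszN absz_nat => ->.
Qed.

Lemma agree_nbhs (x : cfg A) (U : set (cfg A)) :
  nbhs x U -> exists n, [set y | agree n y x] `<=` U.
Proof.
(* The filter of cylinders around x converges to x coordinatewise, hence to x. *)
pose F := filter_from [set: nat] (fun n => [set y | agree n y x]).
have FF : ProperFilter F.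
  apply: filter_from_proper; last by move=> n _; exists x.
  apply: filter_from_filter; first by exists 0%N.
  move=> i j _ _; exists (maxn i j) => // y hy; split => k hk; apply: hy;
    by rewrite (leq_trans hk) // ?leq_maxl ?leq_maxr.
suff Fx : F --> x by move=> /Fx [n _ hn]; exists n.
apply/cvg_sup => i; apply/cvg_image => //.
  by rewrite eqEsubset; split => // a _; exists (fun _ => a).
move=> V /=; rewrite nbhs_principalE => /principal_filterP Vx.
exists [set y : cfg A | V (y i)]; first by exists `|i|%N => // y hy; rewrite /= hy.
rewrite eqEsubset; split => a; first by case=> y /= + <-.
by move=> Va; exists (fun j => if j == i then a else x j); rewrite /= eqxx.
Qed.

Lemma cfg_compact : compact [set: cfg A].
Proof.
have := @tychonoff int (fun _ : int => discrete_topology A) (fun _ => setT)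
  (fun _ => @finite_compact (discrete_topology A) setT (@finite_finset A setT)).
by congr (compact _); rewrite eqEsubset.
Qed.

Variable X : set (cfg A).

Lemma nbhs_agree_sub (x : set_type X) n :
  nbhs x [set y : set_type X | agree n (sval y) (sval x)].
Proof. exact: (@initial_continuous _ _ set_val x _ (nbhs_agree (sval x) n)). Qed.

Lemma agree_nbhs_sub (x : set_type X) (U : set (set_type X)) :
  nbhs x U -> exists n, [set y : set_type X | agree n (sval y) (sval x)] `<=` U.
Proof.
rewrite nbhsE => -[W [[V oV VW] Wx] WU].
have /agree_nbhs [n hn] : nbhs (sval x) V by apply: open_nbhs_nbhs; rewrite -VW in Wx.
by exists n => y hy; apply: WU; rewrite -VW; exact: hn.
Qed.

Lemma agree_cluster (hcl : closed X) (w : nat -> set_type X) :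
  exists z : set_type X, forall n N, exists2 m, (N <= m)%N & agree n (sval (w m)) (sval z).
Proof.
pose F := (fun m => sval (w m)) @ \oo.
have FF : ProperFilter F by exact: fmap_proper_filter.
have FX : F X by exists 0%N => // m _; exact: (set_mem (svalP (w m))).
have [c [Xc clc]] := subclosed_compact hcl cfg_compact (subsetT X) FF FX.
exists (exist _ c (mem_set Xc)) => n N.
have hF : F [set sval (w m) | m in [set m | (N <= m)%N]].
  by rewrite /F nbhs_simpl; exists N => // m /= hm; exists m.
by have [y [[m /= hm <-] hag]] := clc _ _ hF (nbhs_agree c n); exists m.
Qed.

End ProductTopology.

Lemma shiftD (A : finType) (a b : int) (x : cfg A) : shift a (shift b x) = shift (a + b) x.
Proof. by apply/funext => h; rewrite /shift opprD addrA. Qed.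

Lemma shift0 (A : finType) (x : cfg A) : shift 0 x = x.
Proof. by apply/funext => h; rewrite /shift subr0. Qed.

Lemma shift_periodicM (A : finType) (k : int) (x : cfg A) :
  shift k x = x -> forall n : int, shift (n * k) x = x.
Proof.
move=> hx; have hn (n : nat) : shift (n%:Z * k) x = x.
  elim: n => [|n IH]; first by rewrite mul0r shift0.
  by rewrite -addn1 PoszD mulrDl mul1r -shiftD hx IH.
case=> n; first exact: hn.
by rewrite -{1}(hn n.+1) shiftD NegzE mulNr addNr shift0.
Qed.

Lemma shift_periodic_modz (A : finType) (k : int) (x : cfg A) :
  shift k x = x -> forall h, x h = x (h %% k)%Z.
Proof.
move=> hx h; have := congr1 (fun y => y (h %% k)%Z) (shift_periodicM hx (- (h %/ k)%Z)).
by rewrite /shift => <-; congr x; rewrite {1}(divz_eq h k); ring.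
Qed.

Lemma nth_flatten_nseq (T : Type) (x0 : T) (c : seq T) n j : (j < n * size c)%N ->
  nth x0 (flatten (nseq n c)) j = nth x0 c (j %% size c).
Proof.
elim: n j => [|n IH] j; first by rewrite mul0n.
move=> hj /=; rewrite nth_cat; case: ltnP => h; first by rewrite modn_small.
rewrite IH; last by move: hj; rewrite mulSn; lia.
by rewrite -{2}(subnK h) modnDr.
Qed.

Lemma size_flatten_nseq (T : Type) (c : seq T) n : size (flatten (nseq n c)) = (n * size c)%N.
Proof. by rewrite size_flatten /shape map_nseq sumn_nseq mulnC. Qed.

Lemma finite_interval (a : int) (n : nat) : finite_set [set h : int | a <= h < a + n%:Z].
Proof.
apply: (sub_finite_set _ (finite_image (fun k : nat => a + k%:Z) (finite_II n))).
move=> h /= /andP[h1 h2]; exists `|h - a|%N; rewrite /= ?/`I_n /=; lia.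
Qed.

Lemma finite_set_bounded (D : set int) :
  finite_set D -> exists M : nat, forall d, D d -> (`|d| <= M)%N.
Proof.
case/finite_fsetP => B ->; exists (\max_(d <- finmap.enum_fset B) `|d|%N) => d hd.
exact: (@leq_bigmax_seq _ _ xpredT (fun d : int => `|d|%N)).
Qed.

Section Language.
Variables (A : finType) (X : set (cfg A)).
Hypothesis hX : shift_invariant X.
Variable d0 : A.

(* [d0] is only a default for [nth] and is never read: indices stay below [size u]. *)
Definition occurs (x : cfg A) (k : int) (u : seq A) :=
  forall i : nat, (i < size u)%N -> x (k + i%:Z) = nth d0 u i.

Definition legal (u : seq A) := exists2 x, X x & occurs x 0 u.

Lemma legal_occurs x k u : X x -> occurs x k u -> legal u.
Proof.
move=> Xx ho; exists (shift (- k) x); first exact: hX.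
by move=> i hi; rewrite /shift add0r opprK addrC; exact: ho.
Qed.

Lemma legal_factor s u t : legal (s ++ u ++ t) -> legal u.
Proof.
case=> x Xx ho; apply: (@legal_occurs x (size s)%:Z) => // i hi.
have := ho (size s + i)%N; rewrite !nth_cat.
have -> : (size s + i < size s)%N = false by lia.
rewrite addKn hi add0r PoszD => -> //; rewrite !size_cat; lia.
Qed.

Definition glue_length (N : nat) :=
  forall u v, legal u -> legal v -> exists2 a, size a = N & legal (u ++ a ++ v).

Lemma strongly_irreducible_glue :
  strongly_irreducible X -> exists2 N, (0 < N)%N & glue_length N.
Proof.
case=> Delta [fD HD]; have [M hM] := finite_set_bounded fD.
exists M.+1 => // u v [x1 X1 o1] [x2 X2 o2].
pose k : int := (size u)%:Z + M.+1%:Z.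
have [] := HD _ _ (finite_interval 0 (size u)) (finite_interval k (size v)) _
  x1 (shift k x2) X1 (hX _ X2).
  apply/seteqP; split => // h [[w /= /andP[w1 w2] [d /hM hd <-]] /= /andP[h1 h2]].
  by exfalso; rewrite /k in h1 h2; lia.
move=> x [Xx [e1 e2]].
exists (mkseq (fun i => x ((size u)%:Z + i%:Z)) M.+1); first by rewrite size_mkseq.
exists x => // i hi; rewrite !nth_cat size_mkseq add0r.
case: ltnP => h1; first by rewrite -o1 // add0r e1 //=; lia.
case: ltnP => h2; first by rewrite nth_mkseq; [congr x; lia | lia].
have hj : (i - size u - M.+1 < size v)%N by move: hi; rewrite !size_cat size_mkseq; lia.
rewrite -o2 // add0r -[i%:Z](_ : k + (i - size u - M.+1)%N%:Z = i%:Z); last by rewrite /k; lia.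
by rewrite e2 /= ?/shift; [congr x2; lia | rewrite /k; lia].
Qed.


Section PeriodicWords.
Variable N : nat.
Hypotheses (N_gt0 : (0 < N)%N) (glueN : glue_length N).

Definition fillers (u v : seq A) : {set N.-tuple A} :=
  [set a : N.-tuple A | `[< legal (u ++ a ++ v) >]].

Lemma fillers_neq0 u v : legal u -> legal v -> exists a, a \in fillers u v.
Proof.
move=> lu lv; have [a ha la] := glueN lu lv.
by exists (@Tuple N A a (introT eqP ha)); rewrite inE; exact: asboolT.
Qed.

Lemma fillers_widen s u v t : fillers (s ++ u) (v ++ t) \subset fillers u v.
Proof.
apply/fintype.subsetP => a; rewrite !inE => la.
by apply: (@legal_factor s _ t); rewrite -!catA in la *.
Qed.

Lemma legal_infix_periodic w : legal w -> exists c : seq A, [/\ (0 < size c)%N,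
  forall n, legal (flatten (nseq n c)) & exists s t, c = s ++ w ++ t].
Proof.
move=> lw.
pose ctx n := `[< exists s t, [/\ legal (s ++ w), legal (w ++ t) &
   #|fillers (s ++ w) (w ++ t)| = n] >].
have ex_ctx : exists n, ctx n.
  by exists #|fillers w w|; apply: asboolT; exists [::], [::]; rewrite cats0.
case: (ex_minnP ex_ctx) => n0 /asboolW [s0 [t0 [lu lv cn0]]] min_n0.
set u := s0 ++ w in lu cn0; set v := w ++ t0 in lv cn0.
(* By minimality, widening the context of u and v cannot shrink their filler set. *)
have stable s t : legal (s ++ u) -> legal (v ++ t) ->
    fillers (s ++ u) (v ++ t) = fillers u v.
  move=> l1 l2; apply/eqP; rewrite eqEcard fillers_widen cn0 min_n0 //.
  apply: asboolT; exists (s ++ s0), (t0 ++ t).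
  by rewrite -[(s ++ s0) ++ w]catA [w ++ t0 ++ t]catA.
have [a aK] := fillers_neq0 lu lv.
have lB : legal (u ++ a ++ v) by move: aK; rewrite inE => /asboolW.
have [b _ lBB] := glueN lB lB.
pose c := u ++ a ++ v ++ b.
have pow_legal n : legal (flatten (nseq n c) ++ u ++ a ++ v).
  elim: n => [//|n IH].
  have l1 : legal (flatten (nseq n c) ++ u).
    by apply: (@legal_factor [::] _ (a ++ v)); rewrite -catA.
  have l2 : legal (v ++ b ++ u ++ a ++ v).
    by apply: (@legal_factor (u ++ a) _ [::]); rewrite cats0 -!catA in lBB *.
  move: aK; rewrite -(stable _ _ l1 l2) inE => /asboolW.
  by rewrite -addn1 nseqD flatten_cat /= cats0 /c -!catA.
exists c; split.
- by rewrite /c !size_cat size_tuple; lia.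
- by move=> n; apply: (@legal_factor [::] _ (u ++ a ++ v)); exact: pow_legal.
- by exists s0, (a ++ v ++ b); rewrite /c /u -!catA.
Qed.

End PeriodicWords.

Definition periodic_cfg (c : seq A) : cfg A := fun h => nth d0 c `|(h %% (size c)%:Z)%Z|%N.

Lemma periodic_cfg_shift c : shift (size c)%:Z (periodic_cfg c) = periodic_cfg c.
Proof.
apply/funext => h; rewrite /shift /periodic_cfg.
by rewrite -[h - _](_ : (-1) * (size c)%:Z + h = _) ?modzMDl //; ring.
Qed.

Lemma periodic_cfg_nat c (i : nat) : (i < size c)%N -> periodic_cfg c i%:Z = nth d0 c i.
Proof. by move=> hi; rewrite /periodic_cfg modz_nat absz_nat modn_small. Qed.

Lemma periodic_cfg_in (hcl : closed X) (c : seq A) : (0 < size c)%N ->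
  (forall n, legal (flatten (nseq n c))) -> X (periodic_cfg c).
Proof.
move=> c_gt0 hleg; apply: hcl => B /agree_nbhs [m hm].
have [x Xx ox] := hleg (2 * m + 3)%N.
set L := size c in c_gt0 ox *.
pose k : int := ((m + 1) * L)%N%:Z.
exists (shift (- k) x); split; first exact: hX.
apply: hm => h hh; rewrite /shift opprK.
pose j := absz (h + k).
have hj : h + k = j%:Z by rewrite gez0_abs // /k; nia.
have hjl : (j < (2 * m + 3) * L)%N by rewrite /k in hj; nia.
have := ox j; rewrite size_flatten_nseq add0r -hj => -> //.
rewrite nth_flatten_nseq // /periodic_cfg -/L; congr nth.
have -> : (h %% L%:Z)%Z = ((h + k) %% L%:Z)%Z by rewrite /k PoszM addrC modzMDl.
by rewrite hj modz_nat absz_nat.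
Qed.

End Language.

Lemma periodic_points_dense (A : finType) (X : set (cfg A)) (hcl : closed X)
    (hX : shift_invariant X) (hSI : strongly_irreducible X) (x : cfg A) m : X x ->
  exists p, [/\ X p, exists2 k : nat, (0 < k)%N & shift k%:Z p = p & agree m p x].
Proof.
move=> Xx; pose d0 := x 0.
have [N N_gt0 glueN] := strongly_irreducible_glue hX d0 hSI.
pose w : seq A := mkseq (fun i : nat => x (i%:Z - m%:Z)) (2 * m + 1).
have lw : legal X d0 w.
  apply: (@legal_occurs _ X hX d0 x (- m%:Z) w Xx) => i hi.
  by rewrite size_mkseq in hi; rewrite nth_mkseq // addrC.
have [c [c_gt0 hc [s [t def_c]]]] := legal_infix_periodic hX N_gt0 glueN lw.
pose y := periodic_cfg d0 c.
exists (shift (- ((size s)%:Z + m%:Z)) y); split.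
- exact/hX/(periodic_cfg_in hX).
- by exists (size c) => //; rewrite shiftD addrC -shiftD periodic_cfg_shift.
- move=> h hh; rewrite /shift opprK.
  pose i := absz (h + m%:Z).
  have hi : h + m%:Z = i%:Z by rewrite /i gez0_abs //; lia.
  have hiw : (i < size w)%N by rewrite size_mkseq; lia.
  have -> : h + ((size s)%:Z + m%:Z) = (size s + i)%N%:Z by rewrite PoszD -hi addrCA.
  rewrite /y periodic_cfg_nat; last by rewrite def_c !size_cat; lia.
  rewrite def_c nth_cat ltnNge leq_addr /= addKn nth_cat hiw.
  by rewrite nth_mkseq; [congr x; lia | rewrite size_mkseq in hiw].
Qed.

Lemma injective_finite_onto (T : choiceType) (f : T -> T) (S : set T) : finite_set S ->
  f @` S `<=` S -> injective f -> S `<=` f @` S.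
Proof.
move=> fS fSS finj p Sp.
pose s : seq T := finmap.enum_fset (fset_set S).
have memS x : (x \in s) = `[< S x >] by rewrite /s in_fset_set // inE.
have um : uniq (map f s) by rewrite map_inj_uniq // finmap.fset_uniq.
have sub : {subset map f s <= s}.
  move=> _ /mapP [y ys ->]; rewrite memS; apply: asboolT; apply: fSS; exists y => //.
  by move: ys; rewrite memS => /asboolW.
have [_ e] := uniq_min_size um sub (eq_leq (esym (size_map f s))).
have : p \in map f s by rewrite e memS; exact: asboolT.
by case/mapP => q qs ->; exists q => //; move: qs; rewrite memS => /asboolW.
Qed.

Lemma finite_index_of_code (T : Type) (G H : set T) (mul : T -> T -> T)
    (C : finType) (code : T -> C) :
  (forall a b, G a -> G b -> code a = code b -> exists2 h, H h & b = mul a h) ->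
  finite_index G mul H.
Proof.
move=> hcode; have [[a0 Ga0]|G0] := pselect (G !=set0); last first.
  exists set0; split => // a Ga; exfalso; exact: G0 (ex_intro _ a Ga).
have /choice [rep hrep] : forall t : C, exists r,
    G r /\ ((exists2 a, G a & code a = t) -> code r = t).
  move=> t; have [[a Ga <-]|nt] := pselect (exists2 a, G a & code a = t).
    by exists a.
  by exists a0; split => // /nt.
exists (rep @` setT); split; first exact/finite_image/finite_finset.
  by move=> _ [t _ <-]; exact: (hrep t).1.
move=> a Ga; exists (rep (code a)); first by exists (code a).
have [Gr cr] := hrep (code a).
exact: hcode Gr Ga (cr (ex_intro2 _ _ a Ga erefl)).
Qed.

Section CellularAutomata.
Variables (A : finType) (X : set (cfg A)).
Hypotheses (hcl : closed X) (hX : shift_invariant X).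
Local Notation T := (set_type X).

Definition periodic_pts (k : nat) : set T := [set z : T | shift k%:Z (sval z) = sval z].

Definition window (k : nat) (z : T) : k.-tuple A := [tuple sval z i%:Z | i < k].

Lemma periodic_window_inj k : (0 < k)%N -> {in periodic_pts k &, injective (window k)}.
Proof.
move=> k_gt0 z1 z2 /set_mem h1 /set_mem h2 e; apply: val_inj; apply/funext => h /=.
rewrite (shift_periodic_modz h1) (shift_periodic_modz h2).
have hr : (h %% k%:Z)%Z = (absz (h %% k%:Z)%Z)%:Z.
  by rewrite gez0_abs // modz_ge0 // eqz_nat -lt0n.
have hk : (absz (h %% k%:Z)%Z < k)%N by rewrite -ltz_nat -hr ltz_pmod.
by have := congr1 (fun t => tnth t (Ordinal hk)) e; rewrite !tnth_mktuple -hr.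
Qed.

Lemma finite_periodic_pts k : (0 < k)%N -> finite_set (periodic_pts k).
Proof.
move=> k_gt0; have [->|/set0P [z0 _]] := eqVneq (periodic_pts k) set0.
  exact: finite_set0.
rewrite -(injpinv_image (fun=> z0) (periodic_window_inj k_gt0)).
exact/finite_image/finite_finset.
Qed.

Lemma equivariant_periodic (tau : T -> T) k :
  (forall g z, tau (shiftX hX g z) = shiftX hX g (tau z)) ->
  tau @` periodic_pts k `<=` periodic_pts k.
Proof.
move=> eqv _ [z hz <-]; have zk : shiftX hX k%:Z z = z by apply: val_inj.
by have := eqv k%:Z z; rewrite zk /periodic_pts /= => e; rewrite [in RHS]e.
Qed.

Lemma periodic_ptsM k j z : periodic_pts k z -> periodic_pts (j * k) z.
Proof. by rewrite /periodic_pts /= PoszM => /shift_periodicM; apply. Qed.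

Lemma periodic_pts_shiftX k g z : periodic_pts k z -> periodic_pts k (shiftX hX g z).
Proof. by rewrite /periodic_pts /= shiftD addrC -shiftD => ->. Qed.

Lemma shiftXK g : cancel (shiftX hX g) (shiftX hX (- g)).
Proof. by move=> z; apply: val_inj; rewrite /= shiftD addNr shift0. Qed.

Lemma continuous_agree_preimage (tau : T -> T) (w : nat -> T) (y : T) : continuous tau ->
  (forall m, agree m (sval (tau (w m))) (sval y)) ->
  exists2 z, tau z = y & forall n N, exists2 j, (N <= j)%N & agree n (sval (w j)) (sval z).
Proof.
move=> ctau hw; have [z hz] := agree_cluster hcl w; exists z => //.
apply: val_inj; apply/funext => h /=.
have /agree_nbhs_sub [m hm] :
    nbhs z (tau @^-1` [set v | agree `|h|%N (sval v) (sval (tau z))]).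
  exact: ctau z _ (nbhs_agree_sub (tau z) _).
have [j hj ag] := hz m `|h|%N.
by rewrite -(hm (w j) ag h (leqnn _)); apply: hw.
Qed.

(* Were [sigma] discontinuous at [y], some [zs m] close to [y] would have [sigma (zs m)]
   far from [sigma y]; a cluster point of the [sigma (zs m)] is sent to [y] by [tau]. *)
Lemma inverse_continuous (tau sigma : T -> T) : continuous tau ->
  cancel tau sigma -> cancel sigma tau -> continuous sigma.
Proof.
move=> ctau c1 c2 y U /agree_nbhs_sub [n hn].
suff [m hm] : exists m, forall z : T, agree m (sval z) (sval y) ->
    agree n (sval (sigma z)) (sval (sigma y)).
  by apply: filterS (nbhs_agree_sub y m) => z /hm /hn.
apply: contrapT => hneg.
have /choice [zs hzs] : forall m, exists z : T, agree m (sval z) (sval y) /\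
    ~ agree n (sval (sigma z)) (sval (sigma y)).
  move=> m; apply: contrapT => h2; apply: hneg; exists m => z hz.
  by apply: contrapT => h3; apply: h2; exists z.
have hw m : agree m (sval (tau ((sigma \o zs) m))) (sval y) by rewrite /= c2; exact: (hzs m).1.
have [z tz clz] := continuous_agree_preimage ctau hw.
have [j _ hj] := clz n 0%N.
by apply: (hzs j).2; rewrite -tz c1.
Qed.

Lemma ca_comp s t : cellular_automaton hX s -> cellular_automaton hX t ->
  cellular_automaton hX (s \o t).
Proof.
case=> cs es [ct et]; split; last by move=> g z /=; rewrite et es.
by move=> z; apply: continuous_comp; [exact: ct | exact: cs].
Qed.

Lemma ca_id : cellular_automaton hX idfun.
Proof. by split => // z; exact: cvg_id. Qed.

Lemma ca_inverse tau sigma : cellular_automaton hX tau ->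
  cancel tau sigma -> cancel sigma tau -> cellular_automaton hX sigma.
Proof.
case=> ctau etau c1 c2; split; first exact: inverse_continuous ctau c1 c2.
by move=> g z; apply: (can_inj c1); rewrite c2 etau c2.
Qed.

Lemma Aut_comp s t : Aut hX s -> Aut hX t -> Aut hX (s \o t).
Proof. by case=> cs bs [ct bt]; split; [exact: ca_comp | exact: bij_comp]. Qed.

Lemma Aut_inverse s : Aut hX s -> exists2 r, Aut hX r & cancel s r /\ cancel r s.
Proof.
case=> cs [r c1 c2]; exists r => //.
by split; [exact: ca_inverse cs c1 c2 | exact: Bijective c2 c1].
Qed.

Hypothesis hSI : strongly_irreducible X.

Lemma periodic_pts_dense (z : T) m :
  exists k p, [/\ (0 < k)%N, periodic_pts k p & agree m (sval p) (sval z)].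
Proof.
have [p [Xp [k k_gt0 pk] ag]] := periodic_points_dense hcl hX hSI m (set_mem (svalP z)).
by exists k, (exist _ p (mem_set Xp)).
Qed.

(* The image of an injective cellular automaton contains every periodic point, hence
   is dense; it is also closed by compactness. *)
Theorem strongly_irreducible_surjunctive : surjunctive hX.
Proof.
move=> tau [ctau eqv] inj y.
have /choice [w hw] : forall m, exists q : T, agree m (sval (tau q)) (sval y).
  move=> m; have [k [p [k_gt0 pk ag]]] := periodic_pts_dense y m.
  have [q _ tq] := injective_finite_onto (finite_periodic_pts k_gt0)
    (equivariant_periodic eqv) inj pk.
  by exists q; rewrite tq.
by have [z] := continuous_agree_preimage ctau hw; exists z.
Qed.

Definition periodic_fixer k : set (T -> T) :=
  [set s | Aut hX s /\ forall q, periodic_pts k q -> s q = q].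

Lemma periodic_fixer_subgroup k :
  is_subgroup (Aut hX) (fun s t => s \o t) idfun (periodic_fixer k).
Proof.
split.
- by move=> s [].
- by split => //; split; [exact: ca_id | exact: (Bijective (g := idfun))].
- by move=> s t [As fs] [At ft]; split => [|q hq /=]; [exact: Aut_comp | rewrite ft ?fs].
- move=> s [As fs]; have [r Ar [c1 c2]] := Aut_inverse As.
  exists r; last by apply/funext => z /=; rewrite c1.
  by split => // q hq; rewrite -{1}(fs q hq) c1.
Qed.

Definition enum_periodic k : seq T := finmap.enum_fset (fset_set (periodic_pts k)).

Lemma enum_periodicP k z : (0 < k)%N -> reflect (periodic_pts k z) (z \in enum_periodic k).
Proof.
move=> k_gt0; rewrite /enum_periodic in_fset_set ?inE; last exact: finite_periodic_pts.
exact: asboolP.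
Qed.

Lemma enum_periodic_shiftX k g : (0 < k)%N ->
  perm_eq (map (shiftX hX g) (enum_periodic k)) (enum_periodic k).
Proof.
move=> k_gt0; apply: uniq_perm; rewrite ?finmap.fset_uniq //.
  by rewrite map_inj_uniq ?finmap.fset_uniq //; exact: can_inj (shiftXK g).
move=> z; apply/mapP/(enum_periodicP _ k_gt0) => [[y /(enum_periodicP _ k_gt0) hy ->]|hz].
  exact: periodic_pts_shiftX.
exists (shiftX hX (- g) z); first exact/(enum_periodicP _ k_gt0)/periodic_pts_shiftX.
by rewrite -{1}(shiftXK (- g) z) opprK.
Qed.

Definition periodic_code k (s : T -> T) : (size (enum_periodic k)).-tuple (k.-tuple A) :=
  map_tuple (fun q => window k (s q)) (in_tuple (enum_periodic k)).

Lemma periodic_fixer_finite_index k : (0 < k)%N ->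
  finite_index (Aut hX) (fun s t => s \o t) (periodic_fixer k).
Proof.
move=> k_gt0; apply: (@finite_index_of_code _ _ _ _ _ (periodic_code k)) => a b Aa Ab e.
have ab q : periodic_pts k q -> b q = a q.
  move=> pq; have qin : q \in enum_periodic k by apply/enum_periodicP.
  have /eq_in_map eqab := congr1 val e.
  apply: (periodic_window_inj k_gt0); rewrite ?inE; last exact: esym (eqab q qin).
    exact: (equivariant_periodic Ab.1.2); exists q.
  exact: (equivariant_periodic Aa.1.2); exists q.
have [r Ar [c1 c2]] := Aut_inverse Aa.
exists (r \o b); last by apply/funext => z /=; rewrite c2.
by split => [|q hq /=]; [exact: Aut_comp | rewrite ab // c1].
Qed.

(* An automorphism moving z also moves a periodic point close to z, so it lies outside
   the finite-index subgroup fixing all points of that period. *)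
Theorem strongly_irreducible_Aut_residually_finite :
  residually_finite (Aut hX) (fun s t => s \o t) idfun.
Proof.
move=> a Aa hall; apply/funext => z; apply: contrapT => hne.
have [h hh] : exists h, sval (a z) h <> sval z h.
  apply: contrapT => hn; apply: hne; apply: val_inj; apply/funext => h.
  by apply: contrapT => hh; apply: hn; exists h.
have /agree_nbhs_sub [m hm] : nbhs z (a @^-1` [set v | agree `|h|%N (sval v) (sval (a z))]).
  exact: Aa.1.1 z _ (nbhs_agree_sub (a z) _).
have [k [p [k_gt0 pk ag]]] := periodic_pts_dense z (maxn m `|h|%N).
have ap : a p = p.
  exact: (hall _ (periodic_fixer_subgroup k) (periodic_fixer_finite_index k_gt0)).2 p pk.
apply: hh; rewrite -(hm p _ h (leqnn _)) ?ap; first by apply: ag; exact: leq_maxr.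
by move=> i hi; apply: ag; exact: leq_trans hi (leq_maxl _ _).
Qed.

End CellularAutomata.

Section UniformMixture.
Context d (S : measurableType d) (R : realType) (q : nat -> {s : seq S | s != [::]}).
Local Notation qs n := (sval (q n)).

Lemma size_qs_gt0 n : (0 < size (qs n))%N.
Proof. by rewrite lt0n size_eq0; case: (q n). Qed.

Definition mix_weight n : R := 1 / (2 ^ (n + 1))%:R / (size (qs n))%:R.

Lemma mix_weight_gt0 n : 0 < mix_weight n.
Proof. by rewrite /mix_weight !divr_gt0 // ltr0n ?expn_gt0 ?size_qs_gt0. Qed.

Definition mix_measure := mseries (fun n => mscale (NngNum (ltW (mix_weight_gt0 n)))
  (msum (fun i => \d_(nth point (qs n) i)) (size (qs n)))) 0.
HB.instance Definition _ := Measure.on mix_measure.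

Local Open Scope ereal_scope.

Lemma mix_measureE B :
  mix_measure B = \sum_(0 <= n <oo) ((mix_weight n)%:E * \sum_(y <- qs n) \d_y B).
Proof.
apply: eq_eseriesr => n _; congr (_ * _).
by rewrite [in RHS](big_nth point) big_mkord.
Qed.

Lemma mix_measureT : mix_measure setT = 1.
Proof.
rewrite mix_measureE.
transitivity (\sum_(0 <= n <oo) ((1 / (2 ^ (n + 1))%:R)%:E : \bar R)).
  apply: eq_eseriesr => n _; under eq_bigr do rewrite diracT.
  rewrite sumEFin big_const_seq count_predT iter_addr addr0 -EFinM /mix_weight.
  by rewrite -mulr_natr divfK // pnatr_eq0 -lt0n size_qs_gt0.
apply: cvg_lim => //; have := @cvg_geometric_eseries_half R 1%R 0.
by rewrite expr0 divr1.
Qed.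

HB.instance Definition _ := Measure_isProbability.Build _ _ _ mix_measure mix_measureT.

Lemma mix_measure_preimage (f : S -> S) : (forall n, perm_eq (map f (qs n)) (qs n)) ->
  forall B, mix_measure (f @^-1` B) = mix_measure B.
Proof.
move=> fq B; rewrite !mix_measureE; apply: eq_eseriesr => n _; congr (_ * _).
by rewrite -[in RHS](perm_big _ (fq n)) big_map.
Qed.

Lemma mix_measure_gt0 (B : set S) n y : y \in qs n -> B y -> 0 < mix_measure B.
Proof.
move=> yq By; rewrite mix_measureE.
have t_ge0 k : 0 <= (mix_weight k)%:E * \sum_(z <- qs k) \d_z B.
  by rewrite mule_ge0 ?lee_fin ?(ltW (mix_weight_gt0 k)) // sume_ge0.
apply: (lt_le_trans _ (nneseries_lim_ge n.+1 (fun k _ _ => t_ge0 k))).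
rewrite big_nat_recr //= (lt_le_trans _ (leeDr _ _)) ?sume_ge0 //.
rewrite mule_gt0 ?lte_fin ?mix_weight_gt0 // (big_rem y yq) diracE mem_set //.
  by rewrite (lt_le_trans _ (leeDl _ _)) ?lte_fin ?ltr01 // sume_ge0.
Qed.

End UniformMixture.

Theorem corollary1p4 (A : finType) (X : set (cfg A))
    (hcl : closed X) (hX : shift_invariant X) (hne : X !=set0) :
  strongly_irreducible X ->
  [/\ surjunctive hX,
      residually_finite (Aut hX) (fun s t => s \o t) idfun &
      exists (x0 : cfg A) (hx0 : x0 \in X) (mu : probability (borelX hx0) Rreal),
        (forall (g : int) (B : set (borelX hx0)), measurable B ->
           mu (shiftX hX g @^-1` B) = mu B) /\
        (forall U : set (ptX hx0), open U -> U !=set0 -> (0 < mu U)%E)].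
Proof.
move=> hSI; split.
- exact: strongly_irreducible_surjunctive hcl hX hSI.
- exact: strongly_irreducible_Aut_residually_finite hcl hX hSI.
case: hne => x0 /mem_set hx0.
have [k0 [p0 [k0_gt0 p0k0 _]]] := periodic_pts_dense hcl hX hSI (exist _ x0 hx0) 0.
(* Periods are taken among the multiples of k0 so that each list contains p0. *)
have nk0_gt0 n : (0 < n.+1 * k0)%N by rewrite muln_gt0.
have q_neq0 n : enum_periodic X (n.+1 * k0) != [::].
  apply/eqP => e; move: (periodic_ptsM n.+1 p0k0).
  by move=> /(enum_periodicP p0 (nk0_gt0 n)); rewrite e.
pose q n : {s : seq (borelX hx0) | s != [::]} := exist (fun s => s != [::]) _ (q_neq0 n).
exists x0, hx0, (mix_measure Rreal q); split.
- by move=> g B _; apply: mix_measure_preimage => n; exact: enum_periodic_shiftX.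
- move=> U oU [u Uu]; have [m hm] := agree_nbhs_sub (open_nbhs_nbhs (conj oU Uu)).
  have [k [p [k_gt0 pk ag]]] := periodic_pts_dense hcl hX hSI u m.
  apply: (@mix_measure_gt0 _ _ _ q U k.-1 p _ (hm p ag)).
  by apply/enum_periodicP; rewrite // prednK // mulnC; exact: periodic_ptsM.
Qed.
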